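(* In the setting below, let $H^1$ denote the first cohomology of the complex $C^\bullet$. There is a functorial short exact sequence $$0\to D_K/F^0\to H^1\to (T^{-1}/NT^0)\otimes\mathbb{Q}_p\to 0,$$ where the first map sends $c$ to the class of $(0,0,c)$ and the second sends the class of any cocycle of the form $(0,y,c)$ (every class has such a representative, and then $y\in T^{-1}\otimes\mathbb{Q}_p\subset D^{-1}$ modulo components of other slopes that are coboundaries) to the class of the $D^{-1}$-component of $y$. Moreover there is a well-defined functorial map $H^1\to D_K/(F^0+T^0\otimes\mathbb{Q}_p)$ sending a class to the image of $c$ for any representative $(0,y,c)$, and its composition with $D_K/F^0\to H^1$ is the natural projection $D_K/F^0\to D_K/(F^0+T^0\otimes\mathbb{Q}_p)$.
   Context: Let $K$ be a finite extension of $\mathbb{Q}_p$, $K_0$ its maximal unramified subfield, $\sigma$ the Frobenius of $K_0$. Let $T^i$ ($i\in\mathbb{Z}$, finitely many nonzero) be finitely generated free abelian groups with $\mathbb{Z}$-linear maps $N:T^i\to T^{i-1}$ such that $N\otimes\mathbb{Q}:T^0\otimes\mathbb{Q}\to T^{-1}\otimes\mathbb{Q}$ is injective. Let $D=\bigoplus_i D^i$, $D^i=T^i\otimes_{\mathbb{Z}}K_0$, with $\sigma$-semilinear Frobenius $\varphi$ acting on $D^i$ as $p^i(1\otimes\sigma)$ and $K_0$-linear monodromy $N=N\otimes1:D^i\to D^{i-1}$ (so $N\varphi=p\varphi N$). Let $D_K=D\otimes_{K_0}K$ with a decreasing filtration $F^\bullet$; $T^0\otimes\mathbb{Q}_p\subset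 D^0\subset D_K$. (This models $D=D_{st}(V)$, $D_K=D_{dR}(V)$ for $V=H^k_{\text{ét}}(X_{\bar K},\mathbb{Q}_p(r))$ with $X$ totally degenerate, $T^i=T^{k-2r-2i}_{i+r}$.) The complex $C^\bullet$ is $$D\xrightarrow{x\mapsto(\varphi x-x,\;Nx,\;-x\bmod F^0)}D\oplus D\oplus D_K/F^0\xrightarrow{(a,b,c)\mapsto Na+b-p\varphi b}D,$$ in degrees $0,1,2$; its $H^1$ is the semi-stable cohomology $H^1_{st}(K,V)$. *)

(* Abstract model of the semi-stable complex of a
   "totally degenerate" filtered (phi,N)-module. *)
From HB Require Import structures.
From mathcomp Require Import all_boot all_order all_algebra.
Import GRing.Theory.
Set Implicit Arguments.
Unset Strict Implicit.
Unset Printing Implicit Defensive.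
Local Open Scope ring_scope.

Section PhiN.

(* K0 : the unramified field, sigma : its Frobenius, K : the field K with
   the embedding iota : K0 -> K, p : the prime. *)
Variables (K0 K : fieldType) (sigma : {rmorphism K0 -> K0})
          (iota : {rmorphism K0 -> K}) (p : nat).

(* Data (T^i, N, F^0): T^i = Z^(rk i) (free of finite rank, finitely many
   nonzero), N : T^(i+1) -> T^i given by the integer matrix Nm i acting on
   row vectors, and F0 the step F^0 of the filtration on D_K, a K-subspace
   of D_K = (+)_i K^(rk i). *)
Record datum := Datum {
  rk : int -> nat;
  Nm : forall i : int, 'M[int]_(rk (i + 1), rk i);
  F0 : (forall i : int, 'rV[K]_(rk i)) -> Prop;
  rk_fin : exists s : seq int, forall i, i \notin s -> rk i = 0%N;
  N_inj : forall v : 'rV[rat]_(rk 0),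
            v *m map_mx (fun z : int => z%:~R) (Nm (-1)) = 0 -> v = 0;
  F0_0 : F0 (fun i => 0);
  F0_D : forall f g, F0 f -> F0 g -> F0 (fun i => f i + g i);
  F0_Z : forall (k : K) f, F0 f -> F0 (fun i => k *: f i)
}.

Variable d : datum.

(* D = (+)_i T^i (x) K0 and D_K = D (x)_{K0} K *)
Definition Dsp := forall i : int, 'rV[K0]_(rk d i).
Definition DKsp := forall i : int, 'rV[K]_(rk d i).

Definition phiD (x : Dsp) : Dsp :=
  fun i => ((p%:R : K0) ^ i) *: map_mx sigma (x i).
Definition ND (x : Dsp) : Dsp :=
  fun i => x (i + 1) *m map_mx (fun z : int => z%:~R) (Nm d i).
Definition toK (x : Dsp) : DKsp := fun i => map_mx iota (x i).

(* Q_p = fixed field of the Frobenius sigma; a row with entries in Q_p is an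
   element of T^i (x) Q_p. *)
Definition Qp_row n (v : 'rV[K0]_n) : Prop := map_mx sigma v = v.

(* degree-1 cochains: D (+) D (+) D_K/F^0, represented by (a, b, c) with
   c in D_K (taken modulo F^0 through the relation [cohom]). *)
Definition cochain1 := (Dsp * Dsp * DKsp)%type.

Definition cocycle (z : cochain1) : Prop :=
  forall i, ND z.1.1 i + z.1.2 i - (p%:R : K0) *: phiD z.1.2 i = 0.

(* z and z' define the same class in H^1 : z - z' is d^0 x modulo (0,0,F^0),
   with d^0 x = (phi x - x, N x, - x mod F^0). *)
Definition cohom (z z' : cochain1) : Prop :=
  exists (x : Dsp) (f : DKsp), F0 (d:=d) f /\
    forall i, [/\ z.1.1 i - z'.1.1 i = phiD x i - x i,
                  z.1.2 i - z'.1.2 i = ND x i &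
                  z.2 i - z'.2 i = f i - toK x i].

Definition zeroD : Dsp := fun i => 0.

End PhiN.

Section Morph.
Variables (K0 K : fieldType).

Record dmorph (d d' : datum K) := DMorph {
  Mm : forall i : int, 'M[int]_(rk d i, rk d' i);
  Mm_N : forall i, Nm d i *m Mm i = Mm (i + 1) *m Nm d' i;
  Mm_F0 : forall c, F0 (d:=d) c ->
            F0 (d:=d') (fun i => c i *m map_mx (fun z : int => z%:~R) (Mm i))
}.

Definition mapC (d d' : datum K) (M : dmorph d d')
  (z : cochain1 K0 d) : cochain1 K0 d' :=
  (fun i => z.1.1 i *m map_mx (fun z : int => z%:~R) (Mm M i),
   fun i => z.1.2 i *m map_mx (fun z : int => z%:~R) (Mm M i),
   fun i => z.2 i *m map_mx (fun z : int => z%:~R) (Mm M i)).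

End Morph.

From HB Require Import structures.
From mathcomp Require Import all_boot all_order all_algebra.
From Stdlib Require Import FunctionalExtensionality.
Import GRing.Theory.
Local Open Scope ring_scope.

Set Implicit Arguments.
Unset Strict Implicit.

(* Split the complex by slopes.  On [D^i], i <> 0, the operator [p^i sigma - 1] is bijective,
   so a cocycle can be normalised to the form [(0, y, c)] after subtracting a coboundary in
   every degree but 0; in degree 0 one writes [a_0 = alpha + (sigma y - y)] with [alpha]
   fixed, and the cocycle condition in degree -1 makes [alpha N] simultaneously fixed and a
   [sigma]-coboundary, so [alpha N = 0] and [alpha = 0] by injectivity of [N] on [T^0].
   For a normalised cocycle [y] is concentrated in degree -1 and [sigma]-fixed there, and
   two normalised cocycles are cohomologous exactly through a [phi]-fixed [x], i.e. an
   element of [T^0 (x) Q_p]: it changes [y_{-1}] by [N x] and [c] by [-x], modulo [F^0]. *)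

Lemma intr_eq0_pchar0 (F : idomainType) : [pchar F] =i pred0 ->
  forall z : int, (z%:~R == 0 :> F) = (z == 0).
Proof.
move=> /(pcharf0P F) F0 [] n; first by rewrite -pmulrn F0.
by rewrite NegzE mulrNz oppr_eq0 -pmulrn F0.
Qed.

(* A nonzero maximal minor over [Q] is a nonzero integer, hence stays nonzero in
   characteristic 0. *)
Lemma row_free_intmx_pchar0 (F : fieldType) m n (A : 'M[int]_(m, n)) :
  [pchar F] =i pred0 -> row_free (map_mx intr A : 'M[rat]_(m, n)) ->
  row_free (map_mx intr A : 'M[F]_(m, n)).
Proof.
move=> F0 freeA; have fullAT : row_full (map_mx intr A : 'M[rat]_(m, n))^T.
  by rewrite /row_full mxrank_tr.
have := fullrowsub_unit fullAT; move: (fullrankfun fullAT) => f unitQ.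
have detA : \det (rowsub f A^T) != 0.
  by move: unitQ; rewrite unitmxE unitfE map_trmx -map_mxsub det_map_mx intr_eq0.
apply/eqP/anti_leq; rewrite rank_leq_row /= -mxrank_tr.
apply: leq_trans (mxrankS (rowsub_sub f _)).
have : (map_mx intr (rowsub f A^T) : 'M[F]_m) \in unitmx.
  by rewrite unitmxE unitfE det_map_mx intr_eq0_pchar0.
by rewrite -row_full_unit map_mxsub map_trmx => /eqP ->.
Qed.

Lemma map_mx_mul_intmx (R S : nzRingType) (f : {rmorphism R -> S}) m n k
    (v : 'M[R]_(m, n)) (A : 'M[int]_(n, k)) :
  map_mx f (v *m map_mx intr A) = map_mx f v *m map_mx intr A.
Proof.
by rewrite map_mxM; congr (_ *m _); apply/matrixP => i j; rewrite !mxE rmorph_int.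
Qed.

Section FrobeniusRows.

Variables (K0 : fieldType) (sigma : {rmorphism K0 -> K0}) (p : nat).

Section NonzeroSlope.

Hypothesis hslope : forall i : int, i != 0 ->
  bijective (fun x : K0 => (p%:R : K0) ^ i * sigma x - x).

Lemma slope_fixed_row_eq0 (i : int) n (v : 'rV[K0]_n) :
  i != 0 -> (p%:R : K0) ^ i *: map_mx sigma v = v -> v = 0.
Proof.
move=> /hslope[g fgK _] /rowP fixv; apply/rowP => j; rewrite mxE.
have := fixv j; rewrite !mxE => vj.
by apply: (can_inj fgK); rewrite /= vj subrr rmorph0 mulr0 subr0.
Qed.

Lemma slope_row_coboundary (i : int) n (w : 'rV[K0]_n) :
  i != 0 -> exists v, (p%:R : K0) ^ i *: map_mx sigma v - v = w.
Proof.
move=> /hslope[g _ gK]; exists (map_mx g w).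
by apply/rowP => j; rewrite !mxE; apply: gK.
Qed.

End NonzeroSlope.

Section SlopeZero.

Hypothesis hcok : forall x : K0, exists a y : K0, sigma a = a /\ x = a + (sigma y - y).
Hypothesis hdir : forall a y : K0, sigma a = a -> a = sigma y - y -> a = 0.

Lemma row_fixed_add_coboundary n (w : 'rV[K0]_n) :
  exists a y, Qp_row sigma a /\ w = a + (map_mx sigma y - y).
Proof.
have /fin_all_exists[ay hay] : forall j, exists ay : K0 * K0,
    sigma ay.1 = ay.1 /\ w 0 j = ay.1 + (sigma ay.2 - ay.2).
  by move=> j; have [a [y e]] := hcok (w 0 j); exists (a, y).
exists (\row_j (ay j).1), (\row_j (ay j).2).
by split; apply/rowP => j; rewrite !mxE; case: (hay j).
Qed.

Lemma fixed_row_coboundary_eq0 n (a y : 'rV[K0]_n) :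
  Qp_row sigma a -> a = map_mx sigma y - y -> a = 0.
Proof.
move=> /rowP fixa /rowP ea; apply/rowP => j; rewrite mxE.
by apply: (hdir (y := y 0 j)); [have := fixa j | have := ea j]; rewrite !mxE.
Qed.

End SlopeZero.

End FrobeniusRows.

Section SemistableComplex.

Variables (p : nat) (K0 K : fieldType)
  (sigma : {rmorphism K0 -> K0}) (iota : {rmorphism K0 -> K}) (d : datum K).

Local Notation o := (zeroD K0 d).
Local Notation NmK0 := (map_mx (fun z : int => (z%:~R : K0)) (Nm d (-1))).

Definition dsingle (R : nmodType) (j : int) (v : 'rV[R]_(rk d j)) (i : int) :
    'rV[R]_(rk d i) :=
  if j =P i is ReflectT e then ecast k 'rV[R]_(rk d k) e v else 0.

Lemma dsingle_id (R : nmodType) j (v : 'rV[R]_(rk d j)) : dsingle v j = v.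
Proof. by rewrite /dsingle; case: (j =P j) => // e; rewrite eq_axiomK. Qed.

Lemma dsingle_neq (R : nmodType) j (v : 'rV[R]_(rk d j)) i :
  i != j -> dsingle v i = 0.
Proof. by rewrite /dsingle; case: (j =P i) => // ji /eqP[]. Qed.

Lemma dsingle0 (R : nmodType) j i : dsingle (0 : 'rV[R]_(rk d j)) i = 0.
Proof. by rewrite /dsingle; case: (j =P i) => // e; case: i / e. Qed.

Lemma concentrated_dsingle (R : nmodType) (x : forall i, 'rV[R]_(rk d i)) j :
  (forall i, i != j -> x i = 0) -> x = dsingle (x j).
Proof.
move=> xj; apply: functional_extensionality_dep => i.
by have [->|ij] := eqVneq i j; rewrite ?dsingle_id // dsingle_neq ?xj.
Qed.

Lemma ND_dsingle (t : 'rV[K0]_(rk d 0)) i : ND (dsingle t) i = dsingle (t *m NmK0) i.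
Proof.
have [->|i1] := eqVneq i (-1); first by rewrite /ND !dsingle_id.
by rewrite /ND !dsingle_neq ?mul0mx // addr_eq0.
Qed.

Lemma phiD_dsingle_fixed (t : 'rV[K0]_(rk d 0)) i :
  Qp_row sigma t -> phiD sigma p (dsingle t) i = dsingle t i.
Proof.
move=> fixt; have [->|i0] := eqVneq i 0.
  by rewrite /phiD dsingle_id expr0z scale1r fixt.
by rewrite /phiD dsingle_neq // map_mx0 scaler0.
Qed.

Lemma toK_dsingle (t : 'rV[K0]_(rk d 0)) i :
  toK iota (dsingle t) i = dsingle (map_mx iota t) i.
Proof.
have [->|i0] := eqVneq i 0; first by rewrite /toK !dsingle_id.
by rewrite /toK !dsingle_neq ?map_mx0.
Qed.

Hypothesis hp : prime p.
Hypothesis hchar : [pchar K0] =i pred0.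

Lemma pnat_neq0 : (p%:R : K0) != 0.
Proof. by apply/negP => /eqP p0; have := hchar p; rewrite !inE hp p0 eqxx. Qed.

Lemma N_mul_eq0 (v : 'rV[K0]_(rk d 0)) : v *m NmK0 = 0 -> v = 0.
Proof.
have freeN : row_free NmK0.
  apply: row_free_intmx_pchar0 => //.
  rewrite -kermx_eq0; apply/eqP/row_matrixP => i; rewrite row0.
  by apply: N_inj; rewrite -row_mul mulmx_ker row0.
by move/eqP; rewrite mulmx_free_eq0 // => /eqP.
Qed.

Lemma ND_m1 (x : Dsp K0 d) : ND x (-1) = x 0 *m NmK0.
Proof. by []. Qed.

Lemma scale_phiD (x : Dsp K0 d) i :
  (p%:R : K0) *: phiD sigma p x i = (p%:R : K0) ^ (i + 1) *: map_mx sigma (x i).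
Proof. by rewrite /phiD scalerA expfzDr ?pnat_neq0 // expr1z mulrC. Qed.

Lemma cocycle_m1 (z : cochain1 K0 d) : cocycle sigma p z ->
  z.1.1 0 *m NmK0 = map_mx sigma (z.1.2 (-1)) - z.1.2 (-1).
Proof.
move=> /(_ (-1)) /eqP; rewrite ND_m1 scale_phiD expr0z scale1r.
by rewrite -addrA addr_eq0 opprB => /eqP.
Qed.

Hypothesis hslope : forall i : int, i != 0 ->
  bijective (fun x : K0 => (p%:R : K0) ^ i * sigma x - x).

Lemma cocycle_normalE (y : Dsp K0 d) (c : DKsp d) :
  cocycle sigma p (o, y, c) <->
  (forall i, i != -1 -> y i = 0) /\ Qp_row sigma (y (-1)).
Proof.
have cocycleE i : ND o i + y i - (p%:R : K0) *: phiD sigma p y i = 0 <->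
    (p%:R : K0) ^ (i + 1) *: map_mx sigma (y i) = y i.
  rewrite /ND mul0mx add0r scale_phiD; split => [/eqP|->]; last exact: subrr.
  by rewrite subr_eq0 => /eqP.
split => [yZ | [y0 fixy] i]; last first.
  apply/cocycleE; have [->|i1] := eqVneq i (-1).
    by rewrite expr0z scale1r fixy.
  by rewrite y0 // map_mx0 scaler0.
split => [i i1|]; last by have /cocycleE := yZ (-1); rewrite expr0z scale1r.
by apply: (slope_fixed_row_eq0 hslope (i := i + 1)); [rewrite addr_eq0 | apply/cocycleE].
Qed.

(* The [phi]-fixed vectors of [D] are exactly [T^0 (x) Q_p] in degree 0. *)
Lemma cohom_normalE (y y' : Dsp K0 d) (c c' : DKsp d) :
  cohom sigma iota p (o, y, c) (o, y', c') <->
  exists (t : 'rV[K0]_(rk d 0)) f, [/\ Qp_row sigma t, F0 (d:=d) f,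
    forall i, y i - y' i = dsingle (t *m NmK0) i &
    forall i, c i - c' i = f i - dsingle (map_mx iota t) i].
Proof.
split=> [[x [f [Ff e]]] | [t [f [fixt Ff ey ec]]]]; last first.
  exists (dsingle t), f; split => // i; split => /=.
  - by rewrite subrr phiD_dsingle_fixed // subrr.
  - by rewrite ey ND_dsingle.
  - by rewrite ec toK_dsingle.
have fixx i : phiD sigma p x i = x i.
  by have [+ _ _] := e i; rewrite subrr => /eqP; rewrite eq_sym subr_eq0 => /eqP.
have xE := concentrated_dsingle (fun i i0 => slope_fixed_row_eq0 hslope i0 (fixx i)).
exists (x 0), f; split => // [|i|i].
- by have := fixx 0; rewrite /phiD expr0z scale1r.
- by have [_ -> _] := e i; rewrite {1}xE ND_dsingle.
- by have [_ _ ->] := e i; rewrite {1}xE toK_dsingle.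
Qed.

Hypothesis hcok : forall x : K0, exists a y : K0, sigma a = a /\ x = a + (sigma y - y).
Hypothesis hdir : forall a y : K0, sigma a = a -> a = sigma y - y -> a = 0.

Lemma cocycle_coboundary0 (z : cochain1 K0 d) : cocycle sigma p z ->
  exists v, map_mx sigma v - v = z.1.1 0.
Proof.
move=> zZ; have [a [y [fixa ea]]] := row_fixed_add_coboundary hcok (z.1.1 0).
suff a0 : a = 0 by exists y; rewrite ea a0 add0r.
apply: N_mul_eq0; apply: (fixed_row_coboundary_eq0 hdir (y := z.1.2 (-1) - y *m NmK0)).
  by rewrite /Qp_row map_mx_mul_intmx fixa.
have := cocycle_m1 zZ; rewrite ea mulmxDl map_mxB map_mx_mul_intmx => e.
have subrBBC (u1 u2 u3 u4 : 'rV[K0]_(rk d (-1))) :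
    u1 - u2 - (u3 - u4) = u1 - u3 - (u2 - u4).
  by rewrite !opprB addrACA [RHS]addrACA [- u2 + _]addrC.
by rewrite (canRL (addrK _) e) mulmxBl subrBBC.
Qed.

Lemma cocycle_cohom_normal (z : cochain1 K0 d) : cocycle sigma p z ->
  exists y c, cohom sigma iota p z (o, y, c).
Proof.
move=> zZ; have sol i : exists v : 'rV[K0]_(rk d i),
    (p%:R : K0) ^ i *: map_mx sigma v - v == z.1.1 i.
  have [->|i0] := eqVneq i 0.
    by have [v ev] := cocycle_coboundary0 zZ; exists v; rewrite expr0z scale1r ev.
  by have [v ev] := slope_row_coboundary hslope (z.1.1 i) i0; exists v; rewrite ev.
pose x i := xchoose (sol i).
have ex i : phiD sigma p x i - x i = z.1.1 i by apply/eqP/(xchooseP (sol i)).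
exists (fun i => z.1.2 i - ND x i), (fun i => z.2 i + toK iota x i).
exists x, (fun=> 0); split => [|i]; first exact: F0_0.
by split => /=; rewrite ?subr0 ?ex ?subKr // opprD addrA subrr.
Qed.

Lemma cohom_00E (c c' : DKsp d) :
  cohom sigma iota p (o, o, c) (o, o, c') <-> F0 (d:=d) (fun i => c i - c' i).
Proof.
split=> [/cohom_normalE[t [f [_ Ff ey ec]]] | Fc].
  have t0 : t = 0 by apply: N_mul_eq0; have := ey (-1); rewrite subrr dsingle_id.
  suff -> : (fun i => c i - c' i) = f by [].
  by apply: functional_extensionality_dep => i; rewrite ec t0 map_mx0 (@dsingle0 K) subr0.
apply/(cohom_normalE o o); exists 0, (fun i => c i - c' i).
split=> [|//|i|i]; first by rewrite /Qp_row map_mx0.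
  by rewrite subrr mul0mx (@dsingle0 K0).
by rewrite map_mx0 (@dsingle0 K) subr0.
Qed.

Lemma cohom_00_of_yN (y : Dsp K0 d) (c : DKsp d) (t : 'rV[K0]_(rk d 0)) :
  cocycle sigma p (o, y, c) -> Qp_row sigma t -> y (-1) = t *m NmK0 ->
  cohom sigma iota p (o, y, c) (o, o, fun i => c i + dsingle (map_mx iota t) i).
Proof.
move=> /cocycle_normalE[y0 _] fixt yt; apply/cohom_normalE; exists t, (fun=> 0).
split=> // [|i|i]; first exact: F0_0.
  by rewrite subr0 -yt -(concentrated_dsingle y0).
by rewrite opprD addrA subrr.
Qed.

Lemma cohom_normal_c_in_F0_T0 (y y' : Dsp K0 d) (c c' : DKsp d) :
  cohom sigma iota p (o, y, c) (o, y', c') ->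
  exists f, F0 (d:=d) f /\ (forall i, i != 0 -> c i - c' i = f i) /\
    exists t : 'rV[K0]_(rk d 0), Qp_row sigma t /\ c 0 - c' 0 = f 0 + map_mx iota t.
Proof.
move=> /cohom_normalE[t [f [fixt Ff _ ec]]]; exists f; split=> //; split.
  by move=> i i0; rewrite ec dsingle_neq ?subr0.
exists (- t); split; first by rewrite /Qp_row map_mxN fixt.
by rewrite ec dsingle_id map_mxN.
Qed.

Lemma cocycle_dsingle (v : 'rV[K0]_(rk d (-1))) (c : DKsp d) :
  Qp_row sigma v -> cocycle sigma p (o, dsingle v, c).
Proof.
move=> fixv; apply/cocycle_normalE; split=> [i i1|]; first exact: dsingle_neq.
by rewrite dsingle_id.
Qed.

End SemistableComplex.

Section Functoriality.

Variables (p : nat) (K0 K : fieldType)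
  (sigma : {rmorphism K0 -> K0}) (iota : {rmorphism K0 -> K})
  (d d' : datum K) (M : dmorph d d').

Local Notation MK0 i := (map_mx (fun z : int => (z%:~R : K0)) (Mm M i)).

Lemma ND_mapC (x : Dsp K0 d) i : ND (fun j => x j *m MK0 j) i = ND x i *m MK0 i.
Proof. by rewrite /ND -!mulmxA -!map_mxM Mm_N. Qed.

Lemma phiD_mapC (x : Dsp K0 d) i :
  phiD sigma p (fun j => x j *m MK0 j) i = phiD sigma p x i *m MK0 i.
Proof. by rewrite /phiD map_mx_mul_intmx scalemxAl. Qed.

Lemma cocycle_mapC (z : cochain1 K0 d) :
  cocycle sigma p z -> cocycle sigma p (mapC M z).
Proof.
move=> zZ i; rewrite -[RHS](mul0mx _ (MK0 i)) -(zZ i).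
by rewrite mulmxBl mulmxDl -scalemxAl -ND_mapC -phiD_mapC.
Qed.

Lemma cohom_mapC (z z' : cochain1 K0 d) :
  cohom sigma iota p z z' -> cohom sigma iota p (mapC M z) (mapC M z').
Proof.
case=> x [f [Ff e]]; exists (fun i => x i *m MK0 i).
exists (fun i => f i *m map_mx (fun z : int => (z%:~R : K)) (Mm M i)).
split=> [|i]; first exact: Mm_F0.
have [e1 e2 e3] := e i; split; rewrite /= -mulmxBl.
- by rewrite e1 mulmxBl phiD_mapC.
- by rewrite e2 ND_mapC.
- by rewrite e3 mulmxBl /toK map_mx_mul_intmx.
Qed.

End Functoriality.

Theorem proposition4p2 (p : nat) (K0 K : fieldType)
  (sigma : {rmorphism K0 -> K0}) (iota : {rmorphism K0 -> K})
  (hp : prime p) (hchar : [pchar K0] =i pred0) (hsig : bijective sigma)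
  (hslope : forall i : int, i != 0 ->
     bijective (fun x : K0 => (p%:R : K0) ^ i * sigma x - x))
  (hcok : forall x : K0, exists a y : K0, sigma a = a /\ x = a + (sigma y - y))
  (hdir : forall a y : K0, sigma a = a -> a = sigma y - y -> a = 0)
  (d : datum K) :
  let Z := @cocycle K0 K sigma p d in
  let H := @cohom K0 K sigma iota p d in
  let o := (fun i => 0) : Dsp K0 d in
  let NmK0 := map_mx (fun z : int => (z%:~R : K0)) (Nm d (-1)) in
  (forall c : DKsp d, Z (o, o, c)) /\
  (forall c c' : DKsp d,
     H (o, o, c) (o, o, c') <-> F0 (d:=d) (fun i => c i - c' i)) /\
  (forall z, Z z -> exists (y : Dsp K0 d) (c : DKsp d), H z (o, y, c)) /\
  (forall y c, Z (o, y, c) -> Qp_row sigma (y (-1))) /\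
  (forall y c y' c', Z (o, y, c) -> Z (o, y', c') -> H (o, y, c) (o, y', c') ->
     exists t : 'rV[K0]_(rk d 0), Qp_row sigma t /\ y (-1) - y' (-1) = t *m NmK0) /\
  (forall v : 'rV[K0]_(rk d (-1)), Qp_row sigma v ->
     exists y c, Z (o, y, c) /\ y (-1) = v) /\
  (forall y c, Z (o, y, c) ->
     (exists t : 'rV[K0]_(rk d 0), Qp_row sigma t /\ y (-1) = t *m NmK0) ->
     exists c' : DKsp d, H (o, y, c) (o, o, c')) /\
  (forall y c y' c', Z (o, y, c) -> Z (o, y', c') -> H (o, y, c) (o, y', c') ->
     exists f : DKsp d, F0 (d:=d) f /\
       (forall i, i != 0 -> c i - c' i = f i) /\
       exists t : 'rV[K0]_(rk d 0), Qp_row sigma t /\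
         c 0 - c' 0 = f 0 + map_mx iota t) /\
  (forall (d' : datum K) (M : dmorph d d') (z z' : cochain1 K0 d),
     (Z z -> @cocycle K0 K sigma p d' (mapC M z)) /\
     (H z z' -> @cohom K0 K sigma iota p d' (mapC M z) (mapC M z'))).
Proof.
move=> Z H o NmK0; rewrite /Z /H /o /NmK0 {Z H o NmK0}.
have cocycleE := cocycle_normalE (d := d) hp hchar hslope.
split.
  move=> c; apply/cocycleE; split=> //; exact: map_mx0.
split; first exact: cohom_00E.
split; first exact: cocycle_cohom_normal.
split; first by move=> y c /cocycleE[].
split.
  move=> y c y' c' _ _ /(cohom_normalE iota hslope)[t [f [fixt _ ey _]]].
  by exists t; rewrite ey dsingle_id.
split.
  move=> v fixv; exists (dsingle v), (fun=> 0).
  by split; [exact: cocycle_dsingle | exact: dsingle_id].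
split; first by move=> y c yZ [t [fixt yt]]; eexists; exact: cohom_00_of_yN yZ fixt yt.
split; first by move=> y c y' c' _ _; exact: cohom_normal_c_in_F0_T0.
by move=> d' M z z'; split; [exact: cocycle_mapC | exact: cohom_mapC].
Qed.
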